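(* Let $\mathsf{B}$ be Berwald's metric on $\mathbb{B}^n_1(\mathbf{0})$, $$\mathsf{B}(x,y)=\frac{\big(\sqrt{(1-|x|^2)|y|^2+\langle x,y\rangle^2}+\langle x,y\rangle\big)^2}{(1-|x|^2)^2\sqrt{(1-|x|^2)|y|^2+\langle x,y\rangle^2}},$$ and let $\mathsf{B}^*=\mathsf{B}^*(x,\xi)$ be its co-metric. Set $a^{ij}=(1-|x|^2)^3(\delta^{ij}-x^ix^j)$, $b^i=(1-|x|^2)^2x^i$, $\alpha^{*2}=a^{ij}\xi_i\xi_j$ and $\beta^*=b^i\xi_i$. Then $\mathsf{B}^*$ satisfies $$\begin{aligned}&16|x|^2(1-|x|^2)^2\big\{(1-|x|^2)\alpha^{*2}+\beta^{*2}\big\}\mathsf{B}^{*4}+8\big\{(10|x|^2-1)(1-|x|^2)\alpha^{*2}\beta^*+(9|x|^2-1)\beta^{*3}\big\}\mathsf{B}^{*3}\\&+\big\{(1-20|x|^2-8|x|^4)\alpha^{*4}+6(6|x|^2-5)\alpha^{*2}\beta^{*2}-27\beta^{*4}\big\}\mathsf{B}^{*2}+12\alpha^{*4}\beta^*\mathsf{B}^*-\alpha^{*6}=0.\end{aligned}$$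
   Context: The co-metric of a Finsler metric $F$ is $F^*(x,\xi)=\sup_{y\in T_xM\setminus\{0\}}\xi(y)/F(x,y)$ for $\xi=\xi_idx^i\in T^*_xM$. *)

From mathcomp Require Import all_boot all_order all_algebra.
From mathcomp Require Import all_classical all_reals.
Set Implicit Arguments. Unset Strict Implicit. Unset Printing Implicit Defensive.
Import Order.TTheory GRing.Theory Num.Theory.
Local Open Scope ring_scope.
Local Open Scope classical_set_scope.

(* Points / tangent vectors / covectors of R^n are functions 'I_n -> R
   (components in the standard coordinates). *)

Definition dotp (R : realType) (n : nat) (u v : 'I_n -> R) : R :=
  \sum_(i < n) u i * v i.
Definition norm2 (R : realType) (n : nat) (u : 'I_n -> R) : R := dotp u u.

Definition berwald (R : realType) (n : nat) (x y : 'I_n -> R) : R :=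
  let s := Num.sqrt ((1 - norm2 x) * norm2 y + (dotp x y) ^+ 2) in
  (s + dotp x y) ^+ 2 / ((1 - norm2 x) ^+ 2 * s).

Definition cometric (R : realType) (n : nat)
    (F : ('I_n -> R) -> ('I_n -> R) -> R) (x xi : 'I_n -> R) : R :=
  sup [set dotp xi y / F x y | y in [set y : 'I_n -> R | y <> (fun _ => 0)]].

(* Write b = |x| and m = <x, xi>.  B(x, y) depends on y only through |y| and
   <x, y>; normalising y so that (1 - b^2)|y|^2 + <x, y>^2 = 1 and putting
   u = <x, y>/b, Cauchy-Schwarz in the orthogonal complement of x bounds
   xi(y) / B(x, y) by (p u + q v)/(1 + b u)^2 for some (u, v) in the
   unit disc, where p = (1 - b^2)^2 m / b and q = (1 - b^2)^(3/2) |xi_perp|, and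
   conversely each point of the unit circle is reached with equality (with v = 0
   when q = 0).  Hence B^*(x, xi) is the maximum c
   of (p u + q v)/(1 + b u)^2 on the circle.  The intermediate value theorem gives
   a point (u0, v0) where the Lagrange conditions hold; they express p and q as
   polynomials in u0, v0, c, and since alpha^*2 = p^2 + q^2 and beta^* = b p,
   substituting them and v0^2 = 1 - u0^2 makes the quartic vanish identically.
   At x = 0 the metric is Euclidean and B^* = |xi|. *)

From mathcomp Require Import all_boot all_order all_algebra.
From mathcomp Require Import all_classical all_reals.
From mathcomp Require Import topology normedtype realfun.
From mathcomp Require Import ring lra.
Set Implicit Arguments. Unset Strict Implicit. Unset Printing Implicit Defensive.
Import Order.TTheory GRing.Theory Num.Theory.
Import numFieldNormedType.Exports.
Local Open Scope ring_scope.

Section InnerProduct.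
Variables (R : realType) (n : nat).
Implicit Types (x xi u v w : 'I_n -> R) (a c : R).

Lemma dotpC u v : dotp u v = dotp v u.
Proof. by apply: eq_bigr => i _; rewrite mulrC. Qed.

Lemma dotp_lincomb a c u v w :
  dotp (fun i => a * u i + c * v i) w = a * dotp u w + c * dotp v w.
Proof.
rewrite /dotp !mulr_sumr -big_split; apply: eq_bigr => i _ /=.
by rewrite mulrDl !mulrA.
Qed.

Lemma dotp_lincombr a c u v w :
  dotp w (fun i => a * u i + c * v i) = a * dotp w u + c * dotp w v.
Proof. by rewrite dotpC dotp_lincomb ![dotp _ w]dotpC. Qed.

Lemma dotp0l v : dotp (fun _ => 0) v = 0.
Proof. by rewrite /dotp big1 // => i _; rewrite mul0r. Qed.

Lemma norm2_ge0 u : 0 <= norm2 u.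
Proof. by apply: sumr_ge0 => i _; rewrite -expr2 sqr_ge0. Qed.

Lemma norm2_eq0 u : norm2 u = 0 -> u = (fun _ => 0).
Proof.
move=> /eqP; rewrite psumr_eq0 => [/allP u0|i _]; last by rewrite -expr2 sqr_ge0.
by apply: funext => i; apply/eqP; have /= := u0 i (mem_index_enum i); rewrite mulf_eq0 orbb.
Qed.

Lemma norm2_gt0 u : u <> (fun _ => 0) -> 0 < norm2 u.
Proof. by move=> u0; rewrite lt_def norm2_ge0 andbT; apply/eqP => /norm2_eq0. Qed.

Lemma cauchy_schwarz u v : dotp u v ^+ 2 <= norm2 u * norm2 v.
Proof.
have [/norm2_eq0 ->|v0] := eqVneq (norm2 v) 0.
  by rewrite dotpC dotp0l /norm2 dotp0l expr0n mulr0.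
have v_gt0 : 0 < norm2 v by rewrite lt_def v0 norm2_ge0.
pose z i := norm2 v * u i + (- dotp u v) * v i.
have : 0 <= norm2 z := norm2_ge0 z.
rewrite /norm2 {1}/z dotp_lincomb [dotp u z]dotpC [dotp v z]dotpC !dotp_lincomb.
rewrite [dotp v u]dotpC -/(norm2 u) -/(norm2 v) => z_ge0.
nra.
Qed.

Definition perp x u i := norm2 x * u i + (- dotp x u) * x i.

Lemma dotp_perpl x u : dotp (perp x u) x = 0.
Proof. by rewrite dotp_lincomb [dotp u x]dotpC -/(norm2 x); ring. Qed.

Lemma dotp_perp x u v :
  dotp (perp x u) (perp x v) = norm2 x * (norm2 x * dotp u v - dotp x u * dotp x v).
Proof.
rewrite dotp_lincomb [dotp x (perp _ _)]dotpC dotp_perpl.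
by rewrite [dotp u _]dotpC dotp_lincomb [dotp v u]dotpC; ring.
Qed.

Lemma cauchy_schwarz_perp x u v : 0 < norm2 x ->
  (norm2 x * dotp u v - dotp x u * dotp x v) ^+ 2
  <= (norm2 x * norm2 u - dotp x u ^+ 2) * (norm2 x * norm2 v - dotp x v ^+ 2).
Proof.
move=> x_gt0; have := cauchy_schwarz (perp x u) (perp x v).
rewrite /norm2 !dotp_perp -!/(norm2 _) -!expr2 => h.
by rewrite -(ler_pM2l (exprn_gt0 2 x_gt0)) -exprMn (le_trans h) // mulrACA -expr2.
Qed.

Lemma sum_delta_sub_outer c x xi :
  \sum_(i < n) \sum_(j < n) c * ((i == j)%:R - x i * x j) * xi i * xi j
  = c * (norm2 xi - dotp x xi ^+ 2).
Proof.
transitivity (\sum_(i < n) (c * (xi i * xi i) - c * (x i * xi i) * dotp x xi)).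
  apply: eq_bigr => i _.
  transitivity (\sum_(j < n) (c * ((i == j)%:R * (xi i * xi j))
                 - c * (x i * xi i) * (x j * xi j))).
    by apply: eq_bigr => j _; ring.
  rewrite sumrB -!mulr_sumr (bigD1 i) //= eqxx mul1r big1 ?addr0 //.
  by move=> j ji; rewrite eq_sym (negbTE ji) mul0r.
by rewrite sumrB -mulr_sumr -mulr_suml -mulr_sumr /norm2 /dotp; ring.
Qed.

End InnerProduct.

Section PlaneModel.
Variable R : realType.
Implicit Types b p q u v c : R.

(* The Lagrange conditions at (u0, v0) for maximising (p u + q v)/(1 + b u)^2 on
   the unit circle, with maximum c. *)
Definition tangent_point b p q (u0 v0 : R) c :=
  [/\ u0 ^+ 2 + v0 ^+ 2 = 1, 0 < c,
      p = c * (1 + b * u0) * (u0 + 2 * b - b * u0 ^+ 2)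
    & q = c * (1 + b * u0) * v0 * (1 - b * u0)].

Lemma tangent_point_bound b p q u0 v0 c u v : 0 <= b -> b < 1 ->
  tangent_point b p q u0 v0 c -> u ^+ 2 + v ^+ 2 <= 1 ->
  p * u + q * v <= c * (1 + b * u) ^+ 2.
Proof.
move=> b_ge0 b_lt1 [circ c_gt0 -> ->] disc.
(* A sum-of-squares certificate, with multiplier mu for the circle constraint. *)
pose mu := (1 - b ^+ 2 * u0 ^+ 2) / 2.
have mu_ge0 : 0 <= mu.
  have : u0 ^+ 2 <= 1 by nra.
  rewrite /mu; nra.
rewrite -subr_ge0.
have -> : c * (1 + b * u) ^+ 2 - (c * (1 + b * u0) * (u0 + 2 * b - b * u0 ^+ 2) * u
    + c * (1 + b * u0) * v0 * (1 - b * u0) * v) =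
  c * ((b ^+ 2 + mu) * (u - u0) ^+ 2 + mu * (v - v0) ^+ 2
       - mu * (u0 ^+ 2 + v0 ^+ 2 - 1) - mu * (u ^+ 2 + v ^+ 2 - 1)).
  by rewrite /mu; field.
rewrite circ subrr mulr0 subr0; apply: mulr_ge0; first exact: ltW.
have := sqr_ge0 (u - u0); have := sqr_ge0 (v - v0); have := sqr_ge0 b.
nra.
Qed.

(* The tangency conditions with c eliminated and v0 = sqrt (1 - u0^2). *)
Lemma tangent_abscissa_exists b p q : 0 <= b -> b < 1 -> 0 < q ->
  exists2 u0, u0 ^+ 2 < 1 &
    q * (u0 + 2 * b - b * u0 ^+ 2) = p * (Num.sqrt (1 - u0 ^+ 2) * (1 - b * u0)).
Proof.
move=> b_ge0 b_lt1 q_gt0.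
pose f u := q * (u + 2 * b - b * u ^+ 2) - p * (Num.sqrt (1 - u ^+ 2) * (1 - b * u)).
have f_cont : continuous f.
  by move=> t; repeat first [exact: cvg_cst | exact: cvg_id | exact: sqrt_continuous
    | apply: cvgB | apply: cvgD | apply: cvgM | apply: cvgX
    | apply: (continuous_comp (f := fun u => 1 - u ^+ 2))].
have f_end u : u ^+ 2 = 1 -> f u = q * (u + 2 * b - b * u ^+ 2).
  by move=> u2; rewrite /f u2 subrr sqrtr0 mul0r mulr0 subr0.
have [u0] : exists2 u0, u0 \in `[-1, 1] & f u0 = 0.
  apply: IVT; [lra | exact: continuous_subspaceT |].
  rewrite !f_end ?sqrrN ?(expr1n _ 2) //; apply/andP; split.
    by rewrite ge_min; apply/orP; left; nra.
  by rewrite le_max; apply/orP; right; nra.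
rewrite in_itv /= => /andP[u0_ge u0_le] fu0; exists u0; last first.
  by apply/eqP; rewrite -subr_eq0 -fu0.
rewrite lt_neqAle; apply/andP; split; last by nra.
apply/eqP => u0_sq; move: fu0; rewrite f_end // u0_sq => /eqP.
by rewrite mulf_eq0 (gt_eqF q_gt0) /= => /eqP; nra.
Qed.

Lemma tangent_point_exists b p q : 0 <= b -> b < 1 -> 0 <= q -> 0 < p ^+ 2 + q ^+ 2 ->
  exists u0 v0 c, tangent_point b p q u0 v0 c.
Proof.
move=> b_ge0 b_lt1 q_ge0 pq_gt0.
have [q0|q_neq0] := eqVneq q 0.
  have [p_lt0|p_gt0|p0] := ltgtP p 0; last by move: pq_gt0; rewrite p0 q0; lra.
  - exists (-1), 0, (- p / (1 - b) ^+ 2); split; rewrite ?q0 ?mulr0 ?mul0r //.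
    + by rewrite sqrrN; lra.
    + by apply: divr_gt0; [lra | apply: exprn_gt0; lra].
    + by field; apply/eqP; lra.
  - exists 1, 0, (p / (1 + b) ^+ 2); split; rewrite ?q0 ?mulr0 ?mul0r //.
    + by lra.
    + by apply: divr_gt0; [lra | apply: exprn_gt0; lra].
    + by field; apply/eqP; lra.
have q_gt0 : 0 < q by rewrite lt_def q_neq0.
have [u0 u0_sq tangency] := tangent_abscissa_exists p b_ge0 b_lt1 q_gt0.
pose v0 := Num.sqrt (1 - u0 ^+ 2).
have v0_gt0 : 0 < v0 by rewrite sqrtr_gt0 subr_gt0.
have v0_sq : v0 ^+ 2 = 1 - u0 ^+ 2 by rewrite sqr_sqrtr // subr_ge0 ltW.
have bu0_lt1 : (b * u0) ^+ 2 < 1 by rewrite exprMn; nra.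
have bu0_gt : 0 < 1 + b * u0 by nra.
have bu0_lt : 0 < 1 - b * u0 by nra.
exists u0, v0, (q / ((1 + b * u0) * v0 * (1 - b * u0))); split.
- by rewrite v0_sq; lra.
- by rewrite divr_gt0 // !mulr_gt0.
- apply: (mulIf (lt0r_neq0 (mulr_gt0 v0_gt0 bu0_lt))); rewrite -tangency.
  by field; rewrite !lt0r_neq0.
- by field; rewrite !lt0r_neq0.
Qed.

Definition berwald_quartic (X A2 Bt Bs : R) :=
  16 * X * (1 - X) ^+ 2 * ((1 - X) * A2 + Bt ^+ 2) * Bs ^+ 4
  + 8 * ((10 * X - 1) * (1 - X) * A2 * Bt + (9 * X - 1) * Bt ^+ 3) * Bs ^+ 3
  + ((1 - 20 * X - 8 * X ^+ 2) * A2 ^+ 2 + 6 * (6 * X - 5) * A2 * Bt ^+ 2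
     - 27 * Bt ^+ 4) * Bs ^+ 2
  + 12 * A2 ^+ 2 * Bt * Bs - A2 ^+ 3.

Lemma tangent_point_quartic b p q u0 v0 c : tangent_point b p q u0 v0 c ->
  berwald_quartic (b ^+ 2) (p ^+ 2 + q ^+ 2) (p * b) c = 0.
Proof.
move=> [circ _ -> ->].
rewrite (_ : (c * (1 + b * u0) * v0 * (1 - b * u0)) ^+ 2
           = (c * (1 + b * u0) * (1 - b * u0)) ^+ 2 * v0 ^+ 2); last by ring.
rewrite (_ : v0 ^+ 2 = 1 - u0 ^+ 2); last by lra.
by rewrite /berwald_quartic; ring.
Qed.

End PlaneModel.

Lemma sup_attained (R : realType) (E : set R) (c : R) :
  (forall e, E e -> e <= c) -> E c -> sup E = c.
Proof.
move=> ub Ec; apply/le_anti/andP; split; first by apply: ge_sup; [exists c|].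
by apply: (ub_le_sup _ Ec); exists c.
Qed.

Definition berwald_p (R : realType) (n : nat) (b : R) (x xi : 'I_n -> R) :=
  (1 - b ^+ 2) ^+ 2 * dotp x xi / b.
Definition berwald_q (R : realType) (n : nat) (b : R) (x xi : 'I_n -> R) :=
  Num.sqrt ((1 - b ^+ 2) ^+ 3 * (b ^+ 2 * norm2 xi - dotp x xi ^+ 2)) / b.

Section BerwaldCometric.
Variables (R : realType) (n : nat) (x xi : 'I_n -> R) (b : R).
Hypotheses (b_gt0 : 0 < b) (b_lt1 : b < 1) (norm2x : norm2 x = b ^+ 2).

Let m := dotp x xi.
Let G := b ^+ 2 * norm2 xi - m ^+ 2.
Let p := berwald_p b x xi.
Let q := berwald_q b x xi.

Let onemb2_gt0 : 0 < 1 - b ^+ 2.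
Proof. by rewrite subr_gt0 exprn_ilt1 // ltW. Qed.

Let x_gt0 : 0 < norm2 x. Proof. by rewrite norm2x exprn_gt0. Qed.

Let G_ge0 : 0 <= G.
Proof. by rewrite subr_ge0 -norm2x cauchy_schwarz. Qed.

Let q_sq : q ^+ 2 = (1 - b ^+ 2) ^+ 3 * G / b ^+ 2.
Proof. by rewrite /q /berwald_q expr_div_n sqr_sqrtr // mulr_ge0 // exprn_ge0 // ltW. Qed.

Let one_addbt_gt0 t : t ^+ 2 <= 1 -> 0 < 1 + b * t.
Proof.
move=> t_sq; have : (b * t) ^+ 2 < 1.
  rewrite exprMn (le_lt_trans (ler_wpM2l (sqr_ge0 b) t_sq)) // mulr1.
  by rewrite exprn_ilt1 // ltW.
nra.
Qed.

Lemma sqr_berwald_pq : p ^+ 2 + q ^+ 2 = (1 - b ^+ 2) ^+ 3 * (norm2 xi - m ^+ 2).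
Proof. by rewrite q_sq /p /berwald_p -/m /G; field; rewrite lt0r_neq0. Qed.

Lemma berwald_p_mulb : p * b = (1 - b ^+ 2) ^+ 2 * m.
Proof. by rewrite /p /berwald_p -/m; field; rewrite lt0r_neq0. Qed.

Lemma berwald_plane_model y : y <> (fun _ => 0) ->
  exists s u v, [/\ 0 < s, u ^+ 2 + v ^+ 2 <= 1,
    berwald x y = s * (1 + b * u) ^+ 2 / (1 - b ^+ 2) ^+ 2
    & (1 - b ^+ 2) ^+ 2 * dotp xi y <= s * (p * u + q * v)].
Proof.
move=> /norm2_gt0 Y_gt0.
set Y := norm2 y in Y_gt0; set w := dotp x y; set k := dotp xi y.
have w_sq : w ^+ 2 <= b ^+ 2 * Y by rewrite -norm2x cauchy_schwarz.
have gram : (b ^+ 2 * k - m * w) ^+ 2 <= G * (b ^+ 2 * Y - w ^+ 2).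
  by have := cauchy_schwarz_perp xi y x_gt0; rewrite norm2x.
pose s := Num.sqrt ((1 - b ^+ 2) * Y + w ^+ 2).
have s_sq : s ^+ 2 = (1 - b ^+ 2) * Y + w ^+ 2.
  by rewrite sqr_sqrtr // addr_ge0 ?sqr_ge0 // mulr_ge0 // ltW.
have s_gt0 : 0 < s by rewrite sqrtr_gt0 ltr_wpDr ?sqr_ge0 // mulr_gt0.
pose u := w / (b * s); pose v := Num.sqrt (1 - u ^+ 2).
have u_sq : u ^+ 2 <= 1.
  rewrite expr_div_n exprMn ler_pdivrMr ?mul1r ?mulr_gt0 ?exprn_gt0 // s_sq.
  have := ler_wpM2l (ltW onemb2_gt0) w_sq; nra.
have v_sq : v ^+ 2 = 1 - u ^+ 2 by rewrite sqr_sqrtr // subr_ge0.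
exists s, u, v; split=> //; first by rewrite v_sq addrC subrK.
  by rewrite /berwald norm2x -/s -/w /u; field; rewrite !lt0r_neq0.
have t_gt0 : 0 < (1 - b ^+ 2) ^+ 2 / b ^+ 2 by rewrite divr_gt0 // exprn_gt0.
have eL : (1 - b ^+ 2) ^+ 2 * k - s * (p * u)
        = (1 - b ^+ 2) ^+ 2 / b ^+ 2 * (b ^+ 2 * k - m * w).
  by rewrite /u /p /berwald_p -/m; field; rewrite !lt0r_neq0.
have sv_sq : (s * v) ^+ 2 = (1 - b ^+ 2) * (b ^+ 2 * Y - w ^+ 2) / b ^+ 2.
  transitivity (s ^+ 2 - w ^+ 2 / b ^+ 2).
    by rewrite exprMn v_sq /u; field; rewrite !lt0r_neq0.
  by rewrite s_sq; field; rewrite lt0r_neq0.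
have eR : (s * (q * v)) ^+ 2
        = ((1 - b ^+ 2) ^+ 2 / b ^+ 2) ^+ 2 * (G * (b ^+ 2 * Y - w ^+ 2)).
  by rewrite mulrCA exprMn sv_sq q_sq; field; rewrite lt0r_neq0.
have sqv_ge0 : 0 <= s * (q * v).
  by rewrite mulr_ge0 ?mulr_ge0 ?sqrtr_ge0 ?invr_ge0 ?ltW.
rewrite mulrDr -lerBlDl eL.
have := ler_wpM2l (ltW (exprn_gt0 2 t_gt0)) gram; rewrite -eR -exprMn.
nra.
Qed.

Lemma berwald_plane_point u0 v0 : u0 ^+ 2 + v0 ^+ 2 = 1 -> (q = 0 -> v0 = 0) ->
  exists2 y, y <> (fun _ => 0) & berwald x y = (1 + b * u0) ^+ 2 / (1 - b ^+ 2) ^+ 2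
    /\ (1 - b ^+ 2) ^+ 2 * dotp xi y = p * u0 + q * v0.
Proof.
move=> circ q0_v0.
(* y is normalised with <x, y> = b u0, and its component orthogonal to x is
   parallel to that of xi, so that the Cauchy-Schwarz step of
   [berwald_plane_model] is an equality. *)
pose g := q * v0 / ((1 - b ^+ 2) ^+ 2 * G).
have [g_sq g_lin] : (1 - b ^+ 2) * b ^+ 2 * g ^+ 2 * G = v0 ^+ 2
                    /\ (1 - b ^+ 2) ^+ 2 * g * G = q * v0.
  have [G0|G_neq0] := eqVneq G 0; last first.
    rewrite /g expr_div_n [(q * v0) ^+ 2]exprMn q_sq.
    by split; field; rewrite G_neq0 !lt0r_neq0.
  have q0 : q = 0 by rewrite /q /berwald_q -/m -/G G0 mulr0 sqrtr0 mul0r.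
  by rewrite G0 q0_v0 // !mulr0 expr0n.
pose y i := g * perp x xi i + u0 / b * x i.
have w_eq : dotp x y = b * u0.
  rewrite dotp_lincombr [dotp x (perp _ _)]dotpC dotp_perpl -/(norm2 x) norm2x.
  by field; rewrite lt0r_neq0.
have Y_eq : norm2 y = g ^+ 2 * b ^+ 2 * G + u0 ^+ 2.
  rewrite /norm2 dotp_lincomb w_eq dotp_lincombr dotp_perp dotp_perpl norm2x.
  by rewrite /G -/(norm2 xi) -/m; field; rewrite lt0r_neq0.
have s_eq : (1 - b ^+ 2) * norm2 y + dotp x y ^+ 2 = 1.
  by rewrite Y_eq w_eq -[RHS]circ -g_sq; ring.
exists y.
  by move=> y0; move: s_eq; rewrite y0 /norm2 dotp0l dotpC dotp0l; lra.
split; first by rewrite /berwald norm2x s_eq sqrtr1 w_eq mulr1.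
rewrite dotp_lincombr [dotp xi x]dotpC -/m -g_lin /p /berwald_p -/m.
rewrite dotp_lincombr -/(norm2 xi) [dotp xi x]dotpC -/m norm2x.
by rewrite /G; field; rewrite lt0r_neq0.
Qed.

Variables (u0 v0 c : R).
Hypothesis tangent : tangent_point b p q u0 v0 c.

Lemma berwald_ratio_le y : y <> (fun _ => 0) -> dotp xi y / berwald x y <= c.
Proof.
move=> /berwald_plane_model[s [u [v [s_gt0 disc -> lin]]]].
have bu_gt0 : 0 < 1 + b * u by rewrite one_addbt_gt0 // (le_trans _ disc) ?lerDl ?sqr_ge0.
have bound := tangent_point_bound (ltW b_gt0) b_lt1 tangent disc.
rewrite ler_pdivrMr ?divr_gt0 ?mulr_gt0 ?exprn_gt0 // mulrA ler_pdivlMr ?exprn_gt0 //.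
by rewrite mulrC mulrCA (le_trans lin) // ler_pM2l.
Qed.

Lemma berwald_ratio_attained :
  exists2 y, y <> (fun _ => 0) & dotp xi y / berwald x y = c.
Proof.
case: (tangent) => circ c_gt0 p_eq q_eq.
have u0_sq : u0 ^+ 2 <= 1 by rewrite -circ lerDl sqr_ge0.
have bu0_gt0 := one_addbt_gt0 u0_sq.
have bu0_gt0' : 0 < 1 - b * u0 by rewrite -mulrN one_addbt_gt0 // sqrrN.
have q0_v0 : q = 0 -> v0 = 0.
  move=> q0; move: q_eq; rewrite q0 => /esym/eqP.
  rewrite !mulf_eq0 (gt_eqF c_gt0) (gt_eqF bu0_gt0) (gt_eqF bu0_gt0') /=.
  by rewrite orbF => /eqP.
have [y y_neq0 [B_eq k_eq]] := berwald_plane_point circ q0_v0.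
exists y => //.
have pq_eq : p * u0 + q * v0 = c * (1 + b * u0) ^+ 2.
  rewrite q_eq p_eq (_ : c * (1 + b * u0) * v0 * (1 - b * u0) * v0 =
    c * (1 + b * u0) * (1 - b * u0) * (1 - u0 ^+ 2)); first by ring.
  by rewrite -circ; ring.
by rewrite B_eq invf_div mulrA (mulrC (dotp xi y)) k_eq pq_eq mulfK // expf_neq0 // gt_eqF.
Qed.

Lemma cometric_berwald_tangent : cometric (@berwald R n) x xi = c.
Proof.
apply: sup_attained => [_ [y /berwald_ratio_le le_c <-] //|].
by have [y y_neq0 ratio] := berwald_ratio_attained; exists y.
Qed.

End BerwaldCometric.

Section BerwaldAtOrigin.
Variables (R : realType) (n : nat).

Lemma berwald0 (y : 'I_n -> R) : berwald (fun _ => 0) y = Num.sqrt (norm2 y).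
Proof.
rewrite /berwald /norm2 !dotp0l subr0 expr1n !mul1r expr0n mulr0n !addr0 -/(norm2 y).
have [->|s_neq0] := eqVneq (Num.sqrt (norm2 y)) 0; first by rewrite invr0 mulr0.
by rewrite expr2 mulfK.
Qed.

Lemma cometric_berwald0 (xi : 'I_n -> R) : xi <> (fun _ => 0) ->
  cometric (@berwald R n) (fun _ => 0) xi = Num.sqrt (norm2 xi).
Proof.
move=> /norm2_gt0 Z_gt0; apply: sup_attained => [_ [y /norm2_gt0 Y_gt0 <-]|].
  rewrite berwald0 ler_pdivrMr ?sqrtr_gt0 // -sqrtrM ?norm2_ge0 //.
  by rewrite (le_trans (ler_norm _)) // -sqrtr_sqr ler_wsqrtr // cauchy_schwarz.
exists xi; first by move=> xi0; move: Z_gt0; rewrite xi0 /norm2 dotp0l ltxx.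
by rewrite berwald0 -/(norm2 xi) -{1}(sqr_sqrtr (ltW Z_gt0)) expr2 mulfK // gt_eqF ?sqrtr_gt0.
Qed.

End BerwaldAtOrigin.

Lemma cometric_berwald_quartic (R : realType) (n : nat) (x xi : 'I_n -> R) :
  0 < norm2 x -> norm2 x < 1 -> xi <> (fun _ => 0) ->
  berwald_quartic (norm2 x) ((1 - norm2 x) ^+ 3 * (norm2 xi - dotp x xi ^+ 2))
    ((1 - norm2 x) ^+ 2 * dotp x xi) (cometric (@berwald R n) x xi) = 0.
Proof.
move=> x_gt0 x_lt1 xi_neq0.
pose r := Num.sqrt (norm2 x).
have r_gt0 : 0 < r by rewrite sqrtr_gt0.
have r_lt1 : r < 1 by rewrite -sqrtr1 ltr_sqrt.
have normx : norm2 x = r ^+ 2 by rewrite sqr_sqrtr // ltW.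
have pq_gt0 : 0 < berwald_p r x xi ^+ 2 + berwald_q r x xi ^+ 2.
  rewrite (sqr_berwald_pq xi r_gt0 r_lt1 normx) mulr_gt0 ?exprn_gt0 ?subr_gt0 -?normx //.
  by have := cauchy_schwarz x xi; have := norm2_gt0 xi_neq0; nra.
have q_ge0 : 0 <= berwald_q r x xi by rewrite divr_ge0 ?sqrtr_ge0 // ltW.
have [u0 [v0 [c tangent]]] := tangent_point_exists (ltW r_gt0) r_lt1 q_ge0 pq_gt0.
rewrite (cometric_berwald_tangent r_gt0 r_lt1 normx tangent) normx.
rewrite -(sqr_berwald_pq xi r_gt0 r_lt1 normx) -(berwald_p_mulb x xi r_gt0).
exact: tangent_point_quartic tangent.
Qed.

Theorem lemma3p4 (R : realType) (n : nat) (x xi : 'I_n -> R) :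
  norm2 x < 1 ->
  let X := norm2 x in
  let a := fun i j : 'I_n => (1 - X) ^+ 3 * ((i == j)%:R - x i * x j) in
  let b := fun i : 'I_n => (1 - X) ^+ 2 * x i in
  let A2 := \sum_(i < n) \sum_(j < n) a i j * xi i * xi j in
  let Bt := \sum_(i < n) b i * xi i in
  let Bs := cometric (@berwald R n) x xi in
  16 * X * (1 - X) ^+ 2 * ((1 - X) * A2 + Bt ^+ 2) * Bs ^+ 4
  + 8 * ((10 * X - 1) * (1 - X) * A2 * Bt + (9 * X - 1) * Bt ^+ 3) * Bs ^+ 3
  + ((1 - 20 * X - 8 * X ^+ 2) * A2 ^+ 2 + 6 * (6 * X - 5) * A2 * Bt ^+ 2
     - 27 * Bt ^+ 4) * Bs ^+ 2
  + 12 * A2 ^+ 2 * Bt * Bs - A2 ^+ 3 = 0.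
Proof.
move=> x_lt1 X a b A2 Bt Bs; change (berwald_quartic X A2 Bt Bs = 0).
have -> : A2 = (1 - X) ^+ 3 * (norm2 xi - dotp x xi ^+ 2) by apply: sum_delta_sub_outer.
have -> : Bt = (1 - X) ^+ 2 * dotp x xi.
  by rewrite /Bt /dotp mulr_sumr; apply: eq_bigr => i _; rewrite mulrA.
have [xi0|xi_neq0] := pselect (xi = fun _ => 0).
  by rewrite xi0 /norm2 dotp0l dotpC dotp0l /berwald_quartic; ring.
have [/norm2_eq0 x0|X_neq0] := eqVneq X 0.
  rewrite /Bs x0 cometric_berwald0 // dotp0l /X x0 /norm2 dotp0l -/(norm2 xi).
  have := sqr_sqrtr (norm2_ge0 xi); move: (Num.sqrt _) => s <-.
  by rewrite /berwald_quartic; ring.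
by apply: cometric_berwald_quartic; rewrite // lt_def X_neq0 norm2_ge0.
Qed.
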